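(* Let $C = a_1, \dots, a_h, a_1$ and $D = b_1,\dots,b_g,b_1$ be two distinct cycles of an optimal (minimum-weight) cycle cover of the distance graph $G_S$, and let $e=\langle a_1,\dots,a_h\rangle$ and $f=\langle b_1,\dots,b_g\rangle$. Then $e$ and $f$ are inequivalent. Moreover, each of the pairs $(e,\bar f^R)$, $(\bar e^R, f)$ and $(\bar e^R,\bar f^R)$ is inequivalent.
   Context: Alphabet $\Sigma=\{\texttt a,\texttt t,\texttt g,\texttt c\}$ with complement $\bar{\texttt a}=\texttt t$, $\bar{\texttt t}=\texttt a$, $\bar{\texttt g}=\texttt c$, $\bar{\texttt c}=\texttt g$; the reverse complement of $s=b_1\cdots b_n$ is $\bar{s}^R=\bar{b_n}\cdots\bar{b_1}$. $S=\{s_1,\dots,s_m\}$ is a finite set of strings over $\Sigma$ such that no string of $S\cup\bar S^R$ is a substring of another, where $\bar S^R=\{\bar s^R: s\in S\}$. For strings $x,y$, $\mathrm{ov}(x,y)$ is the length of the longest $v$ with $x=uv$, $y=vw$ for nonempty $u,w$; $\mathrm{pref}(x,y)=u$; $\mathrm{dist}(x,y)=|x|-\mathrm{ov}(x,y)$; $\langle x_1,\dots,x_r\rangle=\mathrm{pref}(x_1,x_2)\cdots\mathrm{pref}(x_{r-1},x_r)\,x_r$. The distance graph $G_S$ is the complete directed graph (with loops) on vertex set $S\cup\bar S^R$ with edge weights $w(x,y)=\mathrm{dist}(x,y)$. A cycle $x_1,\dots,x_r,x_1$ (distinct vertices, $r\ge1$) has weight $\sum_{i=1}^r\mathrm{dist}(x_i,x_{i+1})$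 with $x_{r+1}=x_1$. A cycle cover of $G_S$ is a set of vertex-disjoint cycles such that for each $i$ exactly one of $s_i,\bar{s_i}^R$ lies on the cycles; it is optimal if it has minimum total weight. For a finite string $s$, $\mathrm{factor}(s)$ is the shortest string $x$ with $s=x^iy$ for some integer $i\ge1$ and some (possibly empty) prefix $y$ of $x$, and $\mathrm{period}(s)=|\mathrm{factor}(s)|$. Two strings $x,y$ are equivalent if $\mathrm{factor}(y)$ is a cyclic shift of $\mathrm{factor}(x)$ (i.e. $\mathrm{factor}(x)=pq$, $\mathrm{factor}(y)=qp$ for some strings $p,q$), and inequivalent otherwise. *)

From HB Require Import structures.
From mathcomp Require Import all_boot.
Set Implicit Arguments. Unset Strict Implicit. Unset Printing Implicit Defensive.

Inductive base := Ba | Bt | Bg | Bc.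

Definition base_eqb (x y : base) : bool :=
  match x, y with
  | Ba, Ba | Bt, Bt | Bg, Bg | Bc, Bc => true
  | _, _ => false
  end.

Lemma base_eqP : Equality.axiom base_eqb.
Proof. by case; case; constructor. Qed.

HB.instance Definition _ := hasDecEq.Build base base_eqP.

Definition word := seq base.

Definition comp (b : base) : base :=
  match b with Ba => Bt | Bt => Ba | Bg => Bc | Bc => Bg end.

Definition revcomp (s : word) : word := rev (map comp s).

Definition vertices (S : seq word) : seq word := S ++ map revcomp S.

(* ov(x,y): length of the longest v with x = u v, y = v w, u, w nonempty *)
Definition ov_ok (x y : word) (k : nat) : bool :=
  [&& k < size x, k < size y & drop (size x - k) x == take k y].

Definition ov (x y : word) : nat :=
  \max_(k < (size x).+1 | ov_ok x y k) k.

Definition pref (x y : word) : word := take (size x - ov x y) x.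

Definition dist (x y : word) : nat := size x - ov x y.

Fixpoint omerge (xs : seq word) : word :=
  match xs with
  | [::] => [::]
  | [:: x] => x
  | x :: ((y :: _) as t) => pref x y ++ omerge t
  end.

Definition cycle_weight (c : seq word) : nat :=
  match c with
  | [::] => 0
  | x :: t => \sum_(p <- zip c (rcons t x)) dist p.1 p.2
  end.

(* A cycle cover of G_S: a list of cycles (each a nonempty list of distinct
   vertices), pairwise vertex-disjoint, such that for every s in S exactly one
   of s, \bar s^R lies on the cycles. *)
Definition cycle_cover (S : seq word) (CC : seq (seq word)) : Prop :=
  [/\ all (fun c => c != [::]) CC,
      uniq (flatten CC),
      all (fun v => v \in vertices S) (flatten CC) &
      forall s, s \in S ->
        count (fun v => v \in [:: s; revcomp s]) (flatten CC) = 1].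

Definition cover_weight (CC : seq (seq word)) : nat :=
  \sum_(c <- CC) cycle_weight c.

Definition optimal_cycle_cover (S : seq word) (CC : seq (seq word)) : Prop :=
  cycle_cover S CC /\
  forall CC', cycle_cover S CC' -> cover_weight CC <= cover_weight CC'.

(* s = x^i y with i >= 1 and y a prefix of x, where x = take p s *)
Definition factor_len_ok (s : word) (p : nat) : bool :=
  [exists i : 'I_(size s).+2, [exists j : 'I_p.+1,
     (0 < i) && (s == flatten (nseq i (take p s)) ++ take j (take p s))]].

(* period(s): the least such length (p = |s| always works);
   factor(s) = the shortest such x (necessarily a prefix of s). *)
Definition period (s : word) : nat :=
  find (factor_len_ok s) (iota 0 (size s).+1).

Definition factor (s : word) : word := take (period s) s.

Definition equivalent (x y : word) : Prop :=
  exists p q : word, factor x = p ++ q /\ factor y = q ++ p.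

Definition substring_free (S : seq word) : Prop :=
  forall x y, x \in vertices S -> y \in vertices S -> x != y -> ~~ infix x y.

From Pilot Require Import Defs.
From mathcomp Require Import all_boot zify.
Set Implicit Arguments. Unset Strict Implicit. Unset Printing Implicit Defensive.

(* The merged word e = <x_1, ..., x_r> of a cycle of weight w is w-periodic,
   being a prefix of pref(x_1,x_2) ... pref(x_r,x_1) e.  If the words of two
   cycles C and D (reverse-complemented or not) were equivalent, every vertex
   of C and D (oriented accordingly) would occur in the infinite word uuu... for
   u = factor(e), where |u| = period(e) <= w(C).  Sorting these vertices by
   their offset modulo |u|, consecutive ones overlap at least up to their
   offset difference, because substring-freeness forbids one containing
   another; so they form a single cycle of weight at most |u| < w(C) + w(D),
   and replacing C and D by it yields a cheaper cycle cover. *)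

Lemma compK : involutive Defs.comp. Proof. by case. Qed.

Lemma revcompK : involutive revcomp.
Proof. by move=> s; rewrite /revcomp map_rev revK (mapK compK). Qed.

Lemma size_revcomp s : size (revcomp s) = size s.
Proof. by rewrite size_rev size_map. Qed.

Lemma infix_revcomp x y : infix x y -> infix (revcomp x) (revcomp y).
Proof.
move/infixP=> [a [b ->]]; rewrite /revcomp !map_cat !rev_cat.
by apply/infixP; exists (rev (map Defs.comp b)), (rev (map Defs.comp a)); rewrite catA.
Qed.

Lemma nth_revcomp s k : k < size s ->
  nth Ba (revcomp s) k = Defs.comp (nth Ba s (size s - k.+1)).
Proof. by move=> lt_k; rewrite /revcomp nth_rev size_map // (nth_map Ba) //; lia. Qed.

Lemma leq_ov x y k : ov_ok x y k -> k <= ov x y.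
Proof.
move=> ok; have lt_k : k < (size x).+1 by case/and3P: ok; lia.
exact: (@leq_bigmax_cond _ (fun i : 'I_(size x).+1 => ov_ok x y i) val (Ordinal lt_k)).
Qed.

Lemma ovP x y : ov x y = 0 \/ ov_ok x y (ov x y).
Proof.
rewrite /ov; case: (pickP (fun k : 'I_(size x).+1 => ov_ok x y k)) => [k ok|none].
  have [i ok_i ->] := @eq_bigmax_cond _ (fun i : 'I_(size x).+1 => ov_ok x y i) val
     ltac:(by apply/card_gt0P; exists k).
  by right.
by left; rewrite big_pred0.
Qed.

Lemma pref_take_ov x y : pref x y ++ take (ov x y) y = x.
Proof.
rewrite /pref; case: (ovP x y) => [->|/and3P[_ _ /eqP <-]]; last exact: cat_take_drop.
by rewrite subn0 take_size take0 cats0.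
Qed.

Lemma size_pref x y : size (pref x y) = dist x y.
Proof. by rewrite /pref size_takel // leq_subr. Qed.

Lemma dist_le x y : dist x y <= size x.
Proof. exact: leq_subr. Qed.

Lemma dist_gt0 x y : 0 < size x -> 0 < dist x y.
Proof. by rewrite /dist; case: (ovP x y) => [->|/and3P[lt_ov _ _]]; lia. Qed.

Lemma omerge_cons2 x y s : omerge [:: x, y & s] = pref x y ++ omerge (y :: s).
Proof. by []. Qed.

Lemma prefix_omerge x s : prefix x (omerge (x :: s)).
Proof.
elim: s x => [|y s IH] x; first exact: prefix_refl.
have /prefixP[r E] := IH y; rewrite omerge_cons2 E.
rewrite -{1}(pref_take_ov x y) prefix_catr // eqxx /=.
exact/prefix_catl/prefix_take.
Qed.

Lemma infix_omerge x s z : z \in x :: s -> infix z (omerge (x :: s)).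
Proof.
elim: s x => [|y s IH] x.
  by rewrite mem_seq1 => /eqP ->; exact: infix_refl.
rewrite in_cons => /orP[/eqP ->|z_in]; first exact/prefixW/prefix_omerge.
by rewrite omerge_cons2; exact/infix_catl/IH.
Qed.

Fixpoint pref_path (x : word) (s : seq word) (z : word) : word :=
  if s is y :: s' then pref x y ++ pref_path y s' z else pref x z.

Lemma size_pref_path x s z :
  size (pref_path x s z) = \sum_(p <- zip (x :: s) (rcons s z)) dist p.1 p.2.
Proof.
elim: s x => [|y s IH] x /=; first by rewrite big_cons big_nil addn0 size_pref.
by rewrite size_cat IH big_cons size_pref.
Qed.

Lemma prefix_pref_path x s z : prefix (omerge (x :: s)) (pref_path x s z ++ z).
Proof.
elim: s x => [|y s IH] x.
  by rewrite /= -{1}(pref_take_ov x z) prefix_catr // eqxx prefix_take.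
by rewrite omerge_cons2 -[pref_path x _ z]/(pref x y ++ _) -catA prefix_catr // eqxx IH.
Qed.

Definition periodic (w : nat) (s : word) :=
  forall k, k + w < size s -> nth Ba s k = nth Ba s (k + w).

Lemma periodic_prefix_cat t s : prefix s (t ++ s) -> periodic (size t) s.
Proof.
move=> /prefixP[r E] k lt_k.
have := congr1 (nth Ba ^~ (k + size t)) E.
by rewrite /= !nth_cat lt_k ltnNge leq_addl addnK.
Qed.

Lemma periodic_omerge (C : seq word) : periodic (cycle_weight C) (omerge C).
Proof.
case: C => [k //|x s]; rewrite /cycle_weight -size_pref_path.
apply: periodic_prefix_cat.
apply: prefix_trans (prefix_pref_path x s x) _.
by rewrite prefix_catr // eqxx prefix_omerge.
Qed.

Lemma periodic_revcomp w s : periodic w s -> periodic w (revcomp s).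
Proof.
move=> per_s k; rewrite size_revcomp => lt_k.
rewrite !nth_revcomp; try lia.
have -> : size s - k.+1 = size s - (k + w).+1 + w by lia.
by rewrite -per_s //; lia.
Qed.

Lemma periodic_nth_mod w s k : 0 < w -> periodic w s -> k < size s ->
  nth Ba s k = nth Ba s (k %% w).
Proof.
move=> w_gt0 per_s; elim/ltn_ind: k => k IH lt_k.
case: (ltnP k w) => [lt_kw|le_wk]; first by rewrite modn_small.
have -> : k %% w = (k - w) %% w by rewrite -{1}(subnK le_wk) modnDr.
rewrite -IH; try lia.
by rewrite -{1}(subnK le_wk) -per_s // subnK.
Qed.

Lemma size_flatten_nseq i (u : word) : size (flatten (nseq i u)) = i * size u.
Proof. by elim: i => //= i IH; rewrite size_cat IH mulSn. Qed.

Lemma nth_flatten_nseq (u : word) i j k : j <= size u -> k < i * size u + j ->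
  nth Ba (flatten (nseq i u) ++ take j u) k = nth Ba u (k %% size u).
Proof.
move=> le_j; elim: i k => [|i IH] k /= lt_k.
  by rewrite nth_take // modn_small //; lia.
rewrite -catA nth_cat; case: ifP => lt_ku; first by rewrite modn_small.
rewrite IH; last by rewrite mulSn in lt_k; lia.
by rewrite -{2}(@subnK (size u) k) ?modnDr //; lia.
Qed.

Lemma factor_len_ok_size s : factor_len_ok s (size s).
Proof.
apply/existsP; exists (Ordinal (isT : 1 < (size s).+2)).
apply/existsP; exists (Ordinal (ltn0Sn (size s))).
by rewrite /= take_size cats0 take0 cats0 eqxx.
Qed.

Lemma has_factor_len_ok s : has (factor_len_ok s) (iota 0 (size s).+1).
Proof.
by apply/hasP; exists (size s); [rewrite mem_iota; lia | exact: factor_len_ok_size].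
Qed.

Lemma period_le s : period s <= size s.
Proof. by have := has_factor_len_ok s; rewrite has_find size_iota. Qed.

Lemma period_ok s : factor_len_ok s (period s).
Proof.
by have := nth_find 0 (has_factor_len_ok s); rewrite nth_iota // ltnS period_le.
Qed.

Lemma period_min s w : w <= size s -> factor_len_ok s w -> period s <= w.
Proof.
move=> le_w ok_w; rewrite leqNgt; apply/negP => /(before_find 0).
by rewrite nth_iota ?add0n ?ok_w //; lia.
Qed.

Lemma factor_len_ok_nth s w k : w <= size s -> factor_len_ok s w -> k < size s ->
  nth Ba s k = nth Ba s (k %% w).
Proof.
move=> le_w /existsP[i /existsP[j /andP[_ /eqP E]]] lt_k.
have size_take : size (take w s) = w by rewrite size_takel.
have le_jw : j <= w by have := ltn_ord j; lia.
have lt_k' : k < i * w + j.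
  by move: lt_k; rewrite {1}E size_cat size_flatten_nseq !size_takel // size_takel.
have := congr1 (nth Ba ^~ k) E; rewrite /= nth_flatten_nseq ?size_take //.
have w_gt0 : 0 < w by nia.
by move=> ->; rewrite nth_take // ltn_pmod.
Qed.

Lemma period_gt0 s : 0 < size s -> 0 < period s.
Proof.
move=> s_gt0; rewrite lt0n; apply/eqP => p0; move: (period_ok s) s_gt0.
rewrite p0 => /existsP[i /existsP[j /andP[_ /eqP ->]]].
by rewrite !take0 size_cat size_flatten_nseq muln0.
Qed.

Lemma size_factor s : size (factor s) = period s.
Proof. by rewrite size_takel // period_le. Qed.

Lemma periodic_factor_len_ok w s : 0 < w -> w <= size s -> periodic w s ->
  factor_len_ok s w.
Proof.
move=> w_gt0 le_w per_s.
have lt_i : size s %/ w < (size s).+2 by have := leq_div (size s) w; lia.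
have lt_j : size s %% w < w.+1 by have := ltn_pmod (size s) w_gt0; lia.
apply/existsP; exists (Ordinal lt_i); apply/existsP; exists (Ordinal lt_j).
rewrite /= divn_gt0 // le_w /=.
have size_take : size (take w s) = w by rewrite size_takel.
apply/eqP/(@eq_from_nth _ Ba).
  by rewrite size_cat size_flatten_nseq size_take size_takel ?size_take -?divn_eq //; lia.
move=> k lt_k; rewrite nth_flatten_nseq ?size_take -?divn_eq //.
by rewrite nth_take ?ltn_pmod // (periodic_nth_mod w_gt0).
Qed.

Lemma period_le_periodic w s : 0 < w -> periodic w s -> period s <= w.
Proof.
move=> w_gt0 per_s; case: (leqP (size s) w) => [le_sw|lt_ws].
  exact: leq_trans (period_le s) le_sw.
by apply: period_min (periodic_factor_len_ok _ _ _) => //; exact: ltnW.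
Qed.

Definition tile (u : word) (n : nat) : base := nth Ba u (n %% size u).

Lemma nth_factor s k : k < size s -> nth Ba s k = tile (factor s) k.
Proof.
move=> lt_k; have p_gt0 : 0 < period s by apply: period_gt0; lia.
rewrite /tile size_factor /factor nth_take ?ltn_pmod //.
exact: factor_len_ok_nth (period_le s) (period_ok s) lt_k.
Qed.

Lemma tile_catC (P Q : word) n : tile (Q ++ P) n = tile (P ++ Q) (n + size P).
Proof.
rewrite /tile !size_cat addnC.
case: (posnP (size P + size Q)) => [/eqP|p_gt0].
  by rewrite addn_eq0 !size_eq0 => /andP[/eqP-> /eqP->]; rewrite !nth_nil.
set p := size P + size Q in p_gt0 *.
rewrite -modnDml; have : n %% p < p by rewrite ltn_pmod.
move: (n %% p) => m lt_m; rewrite nth_cat; case: ifP => lt_mQ.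
  by rewrite modn_small ?nth_cat ?ltnNge ?leq_addl /= ?addnK //; lia.
have -> : m + size P = (m - size Q) + p by lia.
by rewrite modnDr modn_small ?nth_cat; [case: ifP => //; lia | lia].
Qed.

Definition occurs_at (u x : word) (o : nat) : bool :=
  all (fun k => nth Ba x k == tile u (o + k)) (iota 0 (size x)).

Lemma occurs_atP u x o :
  reflect (forall k, k < size x -> nth Ba x k = tile u (o + k)) (occurs_at u x o).
Proof.
apply: (iffP allP) => occ k; last by rewrite mem_iota => lt_k; apply/eqP/occ.
by move=> lt_k; apply/eqP/occ; rewrite mem_iota.
Qed.

Lemma occurs_at_modn u x o : occurs_at u x o -> occurs_at u x (o %% size u).
Proof.
by move/occurs_atP=> occ; apply/occurs_atP => k lt_k; rewrite occ // /tile modnDml.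
Qed.

Lemma occurs_at_addn u x o : occurs_at u x o -> occurs_at u x (o + size u).
Proof.
move/occurs_atP=> occ; apply/occurs_atP => k lt_k.
by rewrite occ // /tile addnAC modnDr.
Qed.

Lemma occurs_of_infix (z s : word) : infix z s -> exists o, occurs_at (factor s) z o.
Proof.
move=> /infixP[a [b E]]; exists (size a); apply/occurs_atP => k lt_k.
rewrite -nth_factor; last by rewrite E !size_cat ltn_add2l ltn_addr.
by rewrite E nth_cat ltnNge leq_addr /= addKn nth_cat lt_k.
Qed.

Lemma occurs_at_catC (P Q : word) z o :
  occurs_at (Q ++ P) z o -> occurs_at (P ++ Q) z (o + size P).
Proof.
move/occurs_atP=> occ; apply/occurs_atP => k lt_k.
by rewrite occ // tile_catC addnAC.
Qed.

Lemma infix_occurs_at_shift u x y o d :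
  occurs_at u x o -> occurs_at u y (o + d) -> size y + d <= size x -> infix y x.
Proof.
move=> /occurs_atP occ_x /occurs_atP occ_y le_yx.
suff <- : take (size y) (drop d x) = y.
  exact: infix_trans (infix_take _ _) (infix_drop _ _).
have le_y : size y <= size (drop d x) by rewrite size_drop; lia.
apply/(@eq_from_nth _ Ba) => [|k]; rewrite size_takel // => lt_k.
by rewrite nth_take // nth_drop occ_x ?occ_y -?addnA //; lia.
Qed.

Lemma dist_le_shift u x y o d :
  occurs_at u x o -> occurs_at u y (o + d) -> 0 < d -> (x = y \/ ~~ infix y x) ->
  dist x y <= d.
Proof.
move=> occ_x occ_y d_gt0 eq_or_not_infix.
case: (leqP (size x) d) => [le_xd|lt_dx]; first exact: leq_trans (dist_le x y) le_xd.
have lt_y : size x - d < size y.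
  rewrite ltnNge; apply/negP => le_y.
  case: eq_or_not_infix => [eq_xy|/negP]; first by move: le_y; rewrite -eq_xy; lia.
  by apply; apply: infix_occurs_at_shift occ_x occ_y _; lia.
suff /leq_ov : ov_ok x y (size x - d) by rewrite /dist; lia.
apply/and3P; split=> //; first lia.
move/occurs_atP: occ_x => occ_x; move/occurs_atP: occ_y => occ_y.
apply/eqP/(@eq_from_nth _ Ba) => [|k]; first by rewrite size_drop size_takel; lia.
rewrite size_drop => lt_k; rewrite nth_drop nth_take; last lia.
by rewrite occ_x ?occ_y; [congr tile|..]; lia.
Qed.

Section MergeByOffset.

Variables (u : word) (L : seq word).
Hypothesis u_gt0 : 0 < size u.
Hypothesis L_uniq : uniq L.
Hypothesis L_infix_free : {in L &, forall x y, x != y -> ~~ infix x y}.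
Hypothesis L_occurs : {in L, forall x, exists o, occurs_at u x o}.

Definition offset (x : word) : nat := find (occurs_at u x) (iota 0 (size u)).

Lemma offset_spec (x : word) : x \in L -> offset x < size u /\ occurs_at u x (offset x).
Proof.
move=> /L_occurs[o occ].
have has_occ : has (occurs_at u x) (iota 0 (size u)).
  apply/hasP; exists (o %% size u); last exact: occurs_at_modn.
  by rewrite mem_iota ltn_pmod.
have lt_off : offset x < size u by rewrite /offset -[X in _ < X](size_iota 0) -has_find.
by split=> //; have := nth_find 0 has_occ; rewrite nth_iota.
Qed.

Lemma offset_inj : {in L &, injective offset}.
Proof.
move=> x y x_in y_in eq_off; have [//|neq_xy] := eqVneq x y; exfalso.
have [_ occ_x] := offset_spec x_in; have [_ occ_y] := offset_spec y_in.
have occ_x0 : occurs_at u x (offset y + 0) by rewrite addn0 -eq_off.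
have occ_y0 : occurs_at u y (offset x + 0) by rewrite addn0 eq_off.
case: (leqP (size y) (size x)) => [le_yx|/ltnW le_xy].
  have := L_infix_free y_in x_in; rewrite eq_sym neq_xy => /(_ isT)/negP; apply.
  by apply: infix_occurs_at_shift occ_x occ_y0 _; rewrite addn0.
have /negP := L_infix_free x_in y_in neq_xy; apply.
by apply: infix_occurs_at_shift occ_y occ_x0 _; rewrite addn0.
Qed.

Lemma dist_step_le (x y : word) :
  x \in L -> y \in L -> x != y -> offset x <= offset y ->
  dist x y <= offset y - offset x.
Proof.
move=> x_in y_in neq_xy le_off.
have [_ occ_x] := offset_spec x_in; have [_ occ_y] := offset_spec y_in.
have neq_off : offset x != offset y by apply: contra_neq _ neq_xy; exact: offset_inj.
apply: dist_le_shift occ_x _ _ _; first by rewrite subnKC.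
- by rewrite subn_gt0 ltn_neqAle neq_off.
- by right; apply: L_infix_free; rewrite // eq_sym.
Qed.

(* The first vertex, shifted by one period, follows the last one. *)
Lemma dist_wrap_le (x y : word) : x \in L -> y \in L -> offset x <= offset y ->
  dist y x <= size u + offset x - offset y.
Proof.
move=> x_in y_in le_off.
have [lt_x occ_x] := offset_spec x_in; have [lt_y occ_y] := offset_spec y_in.
have {}occ_x : occurs_at u x (offset y + (size u + offset x - offset y)).
  have -> : offset y + (size u + offset x - offset y) = offset x + size u by lia.
  exact: occurs_at_addn.
apply: dist_le_shift occ_y occ_x _ _; first lia.
have [->|neq_xy] := eqVneq x y; first by left.
by right; apply: L_infix_free.
Qed.

Let le_offset : rel word := [rel x y | offset x <= offset y].

Lemma le_offset_last (x : word) (t : seq word) :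
  path le_offset x t -> offset x <= offset (last x t).
Proof.
move=> sorted_xt.
have le_trans : transitive le_offset by move=> ? ? ? /=; exact: leq_trans.
have /allP le_x_t := order_path_min le_trans sorted_xt.
have := mem_last x t; rewrite in_cons => /orP[/eqP-> //|last_in].
exact: le_x_t.
Qed.

Lemma path_weight_le (x : word) (t : seq word) (z : word) :
  {subset x :: t <= L} -> path le_offset x t -> uniq (x :: t) ->
  \sum_(p <- zip (x :: t) (rcons t z)) dist p.1 p.2
    <= offset (last x t) - offset x + dist (last x t) z.
Proof.
elim: t x => [|y t IH] x sub_L; first by rewrite /= big_cons big_nil subnn addn0.
rewrite /= big_cons => /andP[le_xy sorted_yt] /andP[x_notin uniq_yt].
have x_in : x \in L by apply: sub_L; exact: mem_head.
have sub_L' : {subset y :: t <= L}.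
  by move=> v v_in; apply: sub_L; rewrite inE v_in orbT.
have neq_xy : x != y by apply: contraNneq x_notin => ->; exact: mem_head.
apply: leq_trans (leq_add (dist_step_le x_in (sub_L' _ (mem_head _ _)) neq_xy le_xy)
                          (IH y sub_L' sorted_yt uniq_yt)) _.
have le_off : offset x <= offset y := le_xy.
have := le_offset_last sorted_yt; lia.
Qed.

Lemma merge_by_offset : exists2 c, perm_eq c L & cycle_weight c <= size u.
Proof.
pose c := sort le_offset L.
have perm_c : perm_eq c L by rewrite perm_sort perm_refl.
exists c => //.
have sorted_c : sorted le_offset c by apply: sort_sorted => x y; exact: leq_total.
have sub_L : {subset c <= L} by move=> v; rewrite (perm_mem perm_c).
case: c sorted_c sub_L perm_c => [//|x t] sorted_xt sub_L perm_xt.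
have uniq_xt : uniq (x :: t) by rewrite (perm_uniq perm_xt).
have x_in : x \in L by apply: sub_L; exact: mem_head.
have last_in : last x t \in L by apply: sub_L; exact: mem_last.
have := path_weight_le x sub_L sorted_xt uniq_xt.
have := dist_wrap_le x_in last_in (le_offset_last sorted_xt).
have [lt_last _] := offset_spec last_in; rewrite /cycle_weight.
by have := le_offset_last sorted_xt; lia.
Qed.

End MergeByOffset.

Definition orient (b : bool) (v : word) : word := if b then revcomp v else v.

Lemma size_orient b v : size (orient b v) = size v.
Proof. by case: b; rewrite ?size_revcomp. Qed.

Lemma infix_orient b x y : infix x y -> infix (orient b x) (orient b y).
Proof. by case: b => //; exact: infix_revcomp. Qed.

Lemma periodic_orient b w s : periodic w s -> periodic w (orient b s).
Proof. by case: b => //; exact: periodic_revcomp. Qed.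

Lemma orient_pair b s v :
  (orient b v \in [:: s; revcomp s]) = (v \in [:: s; revcomp s]).
Proof.
case: b => //=; rewrite !inE (inj_eq (can_inj revcompK)).
by rewrite (can2_eq revcompK revcompK) orbC.
Qed.

Lemma orient_vertex S b v : v \in vertices S -> orient b v \in vertices S.
Proof.
case: b => //=; rewrite !mem_cat => /orP[v_in|/mapP[s s_in ->]].
  by rewrite map_f ?orbT.
by rewrite revcompK s_in.
Qed.

Lemma vertex_pair S v :
  v \in vertices S -> exists2 s, s \in S & v \in [:: s; revcomp s].
Proof.
rewrite mem_cat => /orP[v_in|/mapP[s s_in ->]]; first by exists v; rewrite ?mem_head.
by exists s; rewrite // !inE eqxx orbT.
Qed.

Lemma perm_nth2 (T : eqType) (x0 : T) (s : seq T) i j :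
  i < size s -> j < size s -> i != j ->
  exists rest, perm_eq s (nth x0 s i :: nth x0 s j :: rest).
Proof.
move=> lt_i lt_j neq_ij; pose ks := [seq k <- iota 0 (size s) | (k != i) && (k != j)].
exists (map (nth x0 s) ks).
rewrite -{1}(mkseq_nth x0 s) -[_ :: _ :: _]/(map (nth x0 s) (i :: j :: ks)).
apply/perm_map/uniq_perm; first exact: iota_uniq.
  by rewrite /= !inE !mem_filter !eqxx /= andbF orbF neq_ij filter_uniq ?iota_uniq.
by move=> k; rewrite !inE mem_filter mem_iota; apply/idP/idP; lia.
Qed.

Section Covers.

Variable S : seq word.

Lemma pair_count_uniq (M : seq word) :
  all (fun v => v \in vertices S) M ->
  (forall s, s \in S -> count (fun v => v \in [:: s; revcomp s]) M = 1) -> uniq M.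
Proof.
move=> /allP M_vert M_count; apply: count_mem_uniq => v.
case: (boolP (v \in M)) => [v_in|/count_memPn //].
have [s s_in v_pair] := vertex_pair (M_vert v v_in).
have : count_mem v M <= count (fun v => v \in [:: s; revcomp s]) M.
  by apply: sub_count => w /eqP ->.
have : 0 < count_mem v M by rewrite -has_count; apply/hasP; exists v => /=.
by rewrite M_count //; lia.
Qed.

Lemma cycle_cover_flatten (CC CC' : seq (seq word)) :
  all (fun c => c != [::]) CC' -> perm_eq (flatten CC) (flatten CC') ->
  cycle_cover S CC -> cycle_cover S CC'.
Proof.
move=> nonempty' perm_CC [_ uniq_CC vert_CC count_CC]; split=> //.
- by rewrite -(perm_uniq perm_CC).
- by rewrite -(perm_all _ perm_CC).
- by move=> s s_in; rewrite -(permP perm_CC) count_CC.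
Qed.

Lemma cycle_cover_reorient bc bd C D rest :
  cycle_cover S (C :: D :: rest) ->
  cycle_cover S (map (orient bc) C :: map (orient bd) D :: rest).
Proof.
move=> [nonempty _ vert count_pair].
set C' := map (orient bc) C; set D' := map (orient bd) D.
have vert' : all (fun v => v \in vertices S) (flatten (C' :: D' :: rest)).
  move: vert; rewrite /= !all_cat !all_map => /and3P[vert_C vert_D ->].
  rewrite andbT; apply/andP; split; [apply: sub_all vert_C | apply: sub_all vert_D];
    exact: orient_vertex.
have count_pair' s : s \in S ->
    count (fun v => v \in [:: s; revcomp s]) (flatten (C' :: D' :: rest)) = 1.
  move=> s_in; rewrite -(count_pair s s_in) /= !count_cat !count_map.
  by congr (_ + (_ + _)); apply: eq_count => v /=; rewrite orient_pair.
split=> //; last exact: pair_count_uniq.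
by move: nonempty; rewrite /= -!size_eq0 !size_map.
Qed.

Lemma cycle_cover_pair CC i j bc bd :
  cycle_cover S CC -> i < size CC -> j < size CC -> i != j ->
  exists rest, perm_eq CC (nth [::] CC i :: nth [::] CC j :: rest) /\
    cycle_cover S (map (orient bc) (nth [::] CC i)
                   :: map (orient bd) (nth [::] CC j) :: rest).
Proof.
move=> cov lt_i lt_j neq_ij; have [rest perm_CC] := perm_nth2 [::] lt_i lt_j neq_ij.
exists rest; split=> //; apply: cycle_cover_reorient.
have [nonempty _ _ _] := cov.
apply: cycle_cover_flatten cov; last exact: perm_flatten.
by rewrite -(perm_all _ perm_CC).
Qed.

Lemma optimal_cover_merge_le CC i j bc bd (c : seq word) :
  optimal_cycle_cover S CC -> i < size CC -> j < size CC -> i != j ->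
  perm_eq c (map (orient bc) (nth [::] CC i) ++ map (orient bd) (nth [::] CC j)) ->
  cycle_weight (nth [::] CC i) + cycle_weight (nth [::] CC j) <= cycle_weight c.
Proof.
move=> [cov opt] lt_i lt_j neq_ij perm_c.
have [rest [perm_CC cov']] := cycle_cover_pair bc bd cov lt_i lt_j neq_ij.
have cov_c : cycle_cover S (c :: rest).
  have [/= /and3P[nonempty_C _ nonempty_rest] _ _ _] := cov'.
  apply: cycle_cover_flatten cov'; last by rewrite /= catA perm_cat2r perm_sym.
  rewrite /= nonempty_rest andbT.
  rewrite -size_eq0 (perm_size perm_c) size_cat addn_eq0 size_eq0.
  by rewrite negb_and nonempty_C.
have := opt _ cov_c; rewrite /cover_weight (perm_big _ perm_CC) !big_cons /=.
by rewrite addnA leq_add2r.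
Qed.

End Covers.

Lemma cycle_weight_gt0 (C : seq word) :
  C != [::] -> {in C, forall x, 0 < size x} -> 0 < cycle_weight C.
Proof.
case: C => [//|x s] _ /(_ x (mem_head _ _)) x_gt0.
rewrite /cycle_weight -size_pref_path.
case: s => [|y s] /=; rewrite ?size_cat size_pref.
  exact: dist_gt0.
by have := dist_gt0 y x_gt0; lia.
Qed.

Lemma infix_orient_omerge b (C : seq word) x :
  x \in C -> infix (orient b x) (orient b (omerge C)).
Proof. by case: C => [//|y s] x_in; apply/infix_orient/infix_omerge. Qed.

Lemma substring_free_size_gt0 S x y :
  substring_free S -> x \in vertices S -> y \in vertices S -> x != y -> 0 < size x.
Proof.
move=> sf x_in y_in neq_xy; rewrite lt0n size_eq0.
by apply: contraNneq (sf _ _ x_in y_in neq_xy) => ->; exact: infix0s.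
Qed.

Lemma cycle_cover_pair_spec S CC i j bc bd :
  substring_free S -> cycle_cover S CC -> i < size CC -> j < size CC -> i != j ->
  let L := map (orient bc) (nth [::] CC i) ++ map (orient bd) (nth [::] CC j) in
  [/\ uniq L, {subset L <= vertices S}, nth [::] CC i != [::], nth [::] CC j != [::]
     & {in L, forall v, 0 < size v}].
Proof.
move=> sf cov lt_i lt_j neq_ij L.
have [rest [_ [/= /and3P[nonempty_C nonempty_D _] uniq_flat vert _]]] :=
  cycle_cover_pair bc bd cov lt_i lt_j neq_ij.
have uniq_L : uniq L by move: uniq_flat; rewrite catA cat_uniq => /andP[].
have L_vert : {subset L <= vertices S}.
  by move=> v v_in; apply: (allP vert); rewrite /= catA mem_cat v_in.
split=> //.
- by move: nonempty_C; case: (nth _ _ i).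
- by move: nonempty_D; case: (nth _ _ j).
have [x x_in] : exists x, x \in map (orient bc) (nth [::] CC i).
  by case: (map _ _) nonempty_C => // x ? _; exists x; exact: mem_head.
have [y y_in] : exists y, y \in map (orient bd) (nth [::] CC j).
  by case: (map _ _) nonempty_D => // y ? _; exists y; exact: mem_head.
have neq_xy : x != y.
  move: uniq_L; rewrite cat_uniq => /and3P[_ /hasPn/(_ y y_in) y_notin _].
  by apply: contraNneq y_notin => <-.
have [x_vert y_vert] : x \in vertices S /\ y \in vertices S.
  by split; apply: L_vert; rewrite mem_cat ?x_in ?y_in ?orbT.
move=> v /L_vert v_vert; have [-> | neq_vx] := eqVneq v x.
  exact: substring_free_size_gt0 sf x_vert y_vert neq_xy.
exact: substring_free_size_gt0 sf v_vert x_vert neq_vx.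
Qed.

Lemma not_equivalent_orient_omerge S CC i j bc bd :
  substring_free S -> optimal_cycle_cover S CC ->
  i < size CC -> j < size CC -> i != j ->
  ~ equivalent (orient bc (omerge (nth [::] CC i)))
               (orient bd (omerge (nth [::] CC j))).
Proof.
move=> sf opt lt_i lt_j neq_ij [P [Q [factor_e factor_f]]].
have [uniq_L L_vert nonempty_C nonempty_D L_gt0] :=
  cycle_cover_pair_spec bc bd sf opt.1 lt_i lt_j neq_ij.
set C := nth [::] CC i in factor_e nonempty_C uniq_L L_vert L_gt0 *.
set D := nth [::] CC j in factor_f nonempty_D uniq_L L_vert L_gt0 *.
set L := map (orient bc) C ++ map (orient bd) D in uniq_L L_vert L_gt0.
set e := orient bc (omerge C) in factor_e *; set f := orient bd (omerge D) in factor_f.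
have C_gt0 : {in C, forall x, 0 < size x}.
  by move=> x x_in; rewrite -(size_orient bc) L_gt0 // mem_cat map_f.
have D_gt0 : {in D, forall y, 0 < size y}.
  by move=> y y_in; rewrite -(size_orient bd) L_gt0 // mem_cat map_f ?orbT.
have period_e : period e <= cycle_weight C.
  apply: period_le_periodic (cycle_weight_gt0 nonempty_C C_gt0) _.
  exact/periodic_orient/periodic_omerge.
have factor_gt0 : 0 < size (factor e).
  have [x x_in] : exists x, x \in C.
    by case: (C) nonempty_C => // x ? _; exists x; exact: mem_head.
  rewrite size_factor period_gt0 //.
  have /infixP[a [b E]] := infix_orient_omerge bc x_in.
  by rewrite /e E !size_cat addnCA ltn_addr // size_orient C_gt0.
have L_occurs : {in L, forall z, exists o, occurs_at (factor e) z o}.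
  move=> z; rewrite mem_cat => /orP[] /mapP[x x_in ->].
    exact/occurs_of_infix/infix_orient_omerge.
  have [o occ] := occurs_of_infix (infix_orient_omerge bd x_in).
  by exists (o + size P); rewrite factor_e; apply: occurs_at_catC; rewrite -factor_f.
have L_infix_free : {in L &, forall x y, x != y -> ~~ infix x y}.
  by move=> x y /L_vert x_vert /L_vert y_vert; exact: sf.
have [c perm_c weight_c] := merge_by_offset factor_gt0 uniq_L L_infix_free L_occurs.
have := optimal_cover_merge_le opt lt_i lt_j neq_ij perm_c; rewrite -/C -/D.
have := cycle_weight_gt0 nonempty_D D_gt0; rewrite size_factor in weight_c; lia.
Qed.

Theorem lemma11 (S : seq word) (CC : seq (seq word)) (i j : nat) :
  uniq S ->
  substring_free S ->
  optimal_cycle_cover S CC ->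
  i < size CC -> j < size CC -> i != j ->
  let e := omerge (seq.nth [::] CC i) in
  let f := omerge (seq.nth [::] CC j) in
  [/\ ~ equivalent e f,
      ~ equivalent e (revcomp f),
      ~ equivalent (revcomp e) f &
      ~ equivalent (revcomp e) (revcomp f)].
Proof.
move=> _ sf opt lt_i lt_j neq_ij e f.
have not_equiv bc bd :=
  @not_equivalent_orient_omerge S CC i j bc bd sf opt lt_i lt_j neq_ij.
by split; [exact: (not_equiv false false) | exact: (not_equiv false true)
          |exact: (not_equiv true false) | exact: (not_equiv true true)].
Qed.
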